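(* Let $\mathscr{F}=(\Omega,\sqsubseteq,\mathcal{E},\mathcal{A})$ where $(\Omega,\sqsubseteq,\mathcal{E})$ is a quasi-principal possibility frame whose poset has a maximum element, and $\mathcal{A}:\Omega\to\wp(\Omega)$ satisfies awareness expressibility: for all $\omega,\nu$, if $\nu\in\mathcal{A}(\omega)$ then $\downarrow\nu\in\mathcal{E}$. Consider the conditions: (i) (awareness joinability) for all $\omega,\nu\in\Omega$ and $E,E'\in\mathcal{E}$, if $\nu\in\mathcal{A}(\omega)$ and $\max(E\cap\downarrow\nu)\cup\max(E'\cap\downarrow\nu)\subseteq\mathcal{A}(\omega)$, then $\max((E\sqcup E')\cap\downarrow\nu)\subseteq\mathcal{A}(\omega)$; (ii) for all $\omega,\nu\in\Omega$ with $\nu\in\mathcal{A}(\omega)$, all $n\ge1$ and all $\nu_1,\dots,\nu_n\in\mathcal{A}(\omega)\cap\downarrow\nu$, we have $\max((\downarrow\nu_1\sqcup\dots\sqcup\downarrow\nu_n)\cap\downarrow\nu)\subseteq\mathcal{A}(\omega)$. Then (i) implies (ii). Conversely, if $\max(E)$ is finite for each $E\in\mathcal{E}$, then (ii) implies (i).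
   Context: For a poset $(\Omega,\sqsubseteq)$, $\downarrow E=\{\omega\mid\omega\sqsubseteq\nu\text{ for some }\nu\in E\}$, $\downarrow\nu=\downarrow\{\nu\}$; $\rho(E)=\{\omega\mid\forall\omega'\sqsubseteq\omega\ \exists\omega''\sqsubseteq\omega'\colon\omega''\in\downarrow E\}$; $\mathcal{RO}(\Omega,\sqsubseteq)=\{E\mid\rho(E)=E\}$ is a Boolean algebra under $\subseteq$ with meet $\cap$, join $E\sqcup F=\rho(E\cup F)$ and complement $\neg E=\{\omega\mid\forall\omega'\sqsubseteq\omega,\ \omega'\notin E\}$. $\max(E)=\{\omega\in E\mid\text{no }\nu\in E\text{ with }\omega\sqsubseteq\nu,\ \nu\not\sqsubseteq\omega\}$. A possibility frame $(\Omega,\sqsubseteq,\mathcal{E})$: $(\Omega,\sqsubseteq)$ a poset and $\mathcal{E}$ a nonempty subset of $\mathcal{RO}(\Omega,\sqsubseteq)$ closed under binary $\cap$ and $\neg$; it is quasi-principal if for every $E\in\mathcal{E}$ and $\omega\in E$, $\omega\in\downarrow\max(E)$. *)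

From Stdlib Require Import List.
Import ListNotations.

Section Poss.
Context {Omega : Type} (le : Omega -> Omega -> Prop).

Definition is_poset : Prop :=
  (forall x, le x x) /\
  (forall x y z, le x y -> le y z -> le x z) /\
  (forall x y, le x y -> le y x -> x = y).

Definition down (E : Omega -> Prop) : Omega -> Prop :=
  fun w => exists v, E v /\ le w v.
Definition down1 (v : Omega) : Omega -> Prop := down (fun x => x = v).

Definition rho (E : Omega -> Prop) : Omega -> Prop :=
  fun w => forall w', le w' w -> exists w'', le w'' w' /\ down E w''.

Definition regular_open (E : Omega -> Prop) : Prop := rho E = E.

Definition inter (E F : Omega -> Prop) : Omega -> Prop := fun w => E w /\ F w.
Definition union (E F : Omega -> Prop) : Omega -> Prop := fun w => E w \/ F w.

Definition join (E F : Omega -> Prop) : Omega -> Prop := rho (union E F).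

Definition neg (E : Omega -> Prop) : Omega -> Prop :=
  fun w => forall w', le w' w -> ~ E w'.

Definition maxs (E : Omega -> Prop) : Omega -> Prop :=
  fun w => E w /\ ~ (exists v, E v /\ le w v /\ ~ le v w).

Definition subset (E F : Omega -> Prop) : Prop := forall w, E w -> F w.

Definition possibility_frame (Ecal : (Omega -> Prop) -> Prop) : Prop :=
  is_poset /\
  (exists E, Ecal E) /\
  (forall E, Ecal E -> regular_open E) /\
  (forall E F, Ecal E -> Ecal F -> Ecal (inter E F)) /\
  (forall E, Ecal E -> Ecal (neg E)).

Definition quasi_principal (Ecal : (Omega -> Prop) -> Prop) : Prop :=
  forall E w, Ecal E -> E w -> down (maxs E) w.

Definition has_maximum : Prop := exists t, forall w, le w t.

Definition awareness_expressible (Ecal : (Omega -> Prop) -> Prop)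
  (A : Omega -> Omega -> Prop) : Prop :=
  forall w v, A w v -> Ecal (down1 v).

(* ↓ν1 ⊔ ... ⊔ ↓νn, for the nonempty list ν1 :: rest, joined left to right *)
Definition join_downs (v1 : Omega) (rest : list Omega) : Omega -> Prop :=
  fold_left (fun acc v => join acc (down1 v)) rest (down1 v1).

Definition awareness_joinability (Ecal : (Omega -> Prop) -> Prop)
  (A : Omega -> Omega -> Prop) : Prop :=
  forall w v E E', Ecal E -> Ecal E' -> A w v ->
    subset (union (maxs (inter E (down1 v))) (maxs (inter E' (down1 v)))) (A w) ->
    subset (maxs (inter (join E E') (down1 v))) (A w).

Definition condition_ii (A : Omega -> Omega -> Prop) : Prop :=
  forall w v, A w v ->
    forall (v1 : Omega) (rest : list Omega),
      Forall (fun u => A w u /\ down1 v u) (v1 :: rest) ->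
      subset (maxs (inter (join_downs v1 rest) (down1 v))) (A w).

Definition finite_set (E : Omega -> Prop) : Prop :=
  exists l : list Omega, forall w, E w <-> In w l.

End Poss.

(* Both directions rest on two facts about the regular-open closure rho.
   First, a join of regular opens is again a set of the frame, since
   E ⊔ F = ¬(¬E ∩ ¬F).  Second, below a given point ν, rho(X) only depends
   on a cofinal part of the down-closed set X; in particular
   (E ⊔ E') ∩ ↓ν = (⊔_{m ∈ M} ↓m) ∩ ↓ν, where M = max(E ∩ ↓ν) ∪ max(E' ∩ ↓ν)
   is cofinal in (E ∪ E') ∩ ↓ν by quasi-principality.
   (i) ⇒ (ii) is then an induction on n, since max(↓νᵢ ∩ ↓ν) = {νᵢ};
   (ii) ⇒ (i) applies (ii) to the finite list M. *)

From Stdlib Require Import List Classical FunctionalExtensionality PropExtensionality.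

Lemma pred_ext {T : Type} (E F : T -> Prop) : (forall x, E x <-> F x) -> E = F.
Proof.
  intro H. apply functional_extensionality; intro x.
  apply propositional_extensionality, H.
Qed.

Lemma finite_set_union {T : Type} (E F : T -> Prop) :
  finite_set E -> finite_set F -> finite_set (union E F).
Proof.
  intros [l Hl] [l' Hl']. exists (l ++ l'). intro x.
  unfold union. rewrite in_app_iff, Hl, Hl'. reflexivity.
Qed.

Section Poset.
Context {Omega : Type} (le : Omega -> Omega -> Prop).
Hypothesis le_poset : is_poset le.

Let le_refl : forall x, le x x := proj1 le_poset.
Let le_trans : forall x y z, le x y -> le y z -> le x z := proj1 (proj2 le_poset).
Let le_anti : forall x y, le x y -> le y x -> x = y := proj2 (proj2 le_poset).

Lemma down1E v x : down1 le v x <-> le x v.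
Proof.
  unfold down1, down. split.
  - intros [u [-> Hxu]]. exact Hxu.
  - intro Hxv. exists v. auto.
Qed.

Lemma regular_open_down_closed E w w' :
  regular_open le E -> E w -> le w' w -> E w'.
Proof.
  intros HE Hw Hw'w. rewrite <- HE in Hw |- *.
  intros u Hu. apply Hw. eauto.
Qed.

Lemma not_neg E w : ~ neg le E w -> exists w', le w' w /\ E w'.
Proof.
  intro H. apply NNPP. intro N. apply H. intros w' Hw' HE. eauto.
Qed.

Lemma join_regular_open E F : regular_open le E -> regular_open le F ->
  join le E F = neg le (inter (neg le E) (neg le F)).
Proof.
  intros HE HF. apply pred_ext; intro w. split.
  - intros Hw w' Hw' [HnE HnF].
    destruct (Hw w' Hw') as [w'' [Hw'' [z [[Hz | Hz] Hw''z]]]].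
    + apply (HnE w'' Hw''). exact (regular_open_down_closed E z w'' HE Hz Hw''z).
    + apply (HnF w'' Hw''). exact (regular_open_down_closed F z w'' HF Hz Hw''z).
  - intros Hw w' Hw'. specialize (Hw w' Hw').
    apply not_and_or in Hw as [Hw | Hw]; apply not_neg in Hw as [u [Hu HEu]];
      exists u; split; auto; exists u; split; auto; [left | right]; exact HEu.
Qed.

Lemma subset_rho X : subset X (rho le X).
Proof.
  intros x Hx x' Hx'x. exists x'. split; auto. exists x. auto.
Qed.

Lemma rho_subset_cofinal X Y :
  (forall x, X x -> down le Y x) -> subset (rho le X) (rho le Y).
Proof.
  intros HXY w Hw w' Hw'.
  destruct (Hw w' Hw') as [w'' [Hw'' [z [Hz Hw''z]]]].
  destruct (HXY z Hz) as [y [Hy Hzy]].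
  exists w''. split; auto. exists y. eauto.
Qed.

Lemma rho_eq_cofinal X Y :
  (forall x, X x -> down le Y x) -> (forall y, Y y -> down le X y) ->
  rho le X = rho le Y.
Proof.
  intros HXY HYX. apply pred_ext; intro w.
  split; apply rho_subset_cofinal; assumption.
Qed.

Lemma rho_union_rho X Y : rho le (union (rho le X) Y) = rho le (union X Y).
Proof.
  apply pred_ext; intro w. split.
  - intros Hw w' Hw'.
    destruct (Hw w' Hw') as [w'' [Hw'' [z [[Hz | Hz] Hw''z]]]].
    + destruct (Hz w'' Hw''z) as [u [Hu [y [Hy Huy]]]].
      exists u. split; eauto. exists y. split; auto. left. exact Hy.
    + exists w''. split; auto. exists z. split; auto. right. exact Hz.
  - apply rho_subset_cofinal. intros x [Hx | Hx]; exists x; split; auto.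
    + left. apply subset_rho, Hx.
    + right. exact Hx.
Qed.

Lemma rho_empty x : ~ rho le (fun _ => False) x.
Proof.
  intro Hx. destruct (Hx x (le_refl x)) as [_ [_ [_ [[] _]]]].
Qed.

Lemma fold_join_down1_rho rest X :
  fold_left (fun acc u => join le acc (down1 le u)) rest (rho le X) =
  rho le (union X (fun u => In u rest)).
Proof.
  revert X. induction rest as [| u rest IH]; intro X; simpl.
  - f_equal. apply pred_ext. unfold union. tauto.
  - unfold join at 2. rewrite rho_union_rho, IH.
    apply rho_eq_cofinal.
    + intros x [[Hx | Hx] | Hx].
      * exists x. split; auto. left. exact Hx.
      * exists u. split; [right; left; reflexivity | apply down1E, Hx].
      * exists x. split; auto. right. right. exact Hx.
    + intros x [Hx | [Hux | Hx]].
      * exists x. split; auto. left. left. exact Hx.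
      * exists x. split; auto. left. right. apply down1E. subst. apply le_refl.
      * exists x. split; auto. right. exact Hx.
Qed.

Lemma join_downs_eq v1 rest : regular_open le (down1 le v1) ->
  join_downs le v1 rest = rho le (fun u => In u (v1 :: rest)).
Proof.
  intro Hv1. unfold join_downs. rewrite <- Hv1 at 1.
  rewrite fold_join_down1_rho. apply rho_eq_cofinal.
  - intros x [Hx | Hx].
    + exists v1. split; [left; reflexivity | apply down1E, Hx].
    + exists x. split; auto. right. exact Hx.
  - intros x [Hv1x | Hx]; exists x; split; auto.
    + left. apply down1E. subst. apply le_refl.
    + right. exact Hx.
Qed.

Lemma rho_inter_down1_cofinal X S v :
  (forall x w, X x -> le w x -> X w) ->
  (forall s, S s -> X s) ->
  (forall x, X x -> le x v -> down le S x) ->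
  inter (rho le X) (down1 le v) = inter (rho le S) (down1 le v).
Proof.
  intros HX HSX HXS. apply pred_ext; intro x.
  split; intros [Hx Hxv]; split; auto.
  - intros x' Hx'. apply down1E in Hxv.
    destruct (Hx x' Hx') as [x'' [Hx'' [z [Hz Hx''z]]]].
    exists x''. split; auto. apply HXS; eauto.
  - revert Hx. apply rho_subset_cofinal.
    intros s Hs. exists s. auto.
Qed.

Lemma maxs_inter_down1 u v : le u v ->
  subset (maxs le (inter (down1 le u) (down1 le v))) (fun x => x = u).
Proof.
  intros Huv x [[Hxu _] Hmax]. apply down1E in Hxu.
  apply le_anti; auto. apply NNPP. intro Hux. apply Hmax.
  exists u. repeat split; auto; apply down1E; auto.
Qed.

End Poset.

Section Frame.
Context {Omega : Type} (le : Omega -> Omega -> Prop)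
  (Ecal : (Omega -> Prop) -> Prop) (A : Omega -> Omega -> Prop).
Hypothesis frame : possibility_frame le Ecal.
Hypothesis aware_expr : awareness_expressible le Ecal A.

Let le_poset : is_poset le := proj1 frame.
Let frame_regular_open : forall E, Ecal E -> regular_open le E :=
  proj1 (proj2 (proj2 frame)).
Let frame_inter : forall E F, Ecal E -> Ecal F -> Ecal (inter E F) :=
  proj1 (proj2 (proj2 (proj2 frame))).
Let frame_neg : forall E, Ecal E -> Ecal (neg le E) :=
  proj2 (proj2 (proj2 (proj2 frame))).

Lemma frame_join E F : Ecal E -> Ecal F -> Ecal (join le E F).
Proof.
  intros HE HF. rewrite join_regular_open; auto.
Qed.

Lemma fold_join_down1_aware w v acc rest :
  awareness_joinability le Ecal A -> A w v -> Ecal acc ->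
  subset (maxs le (inter acc (down1 le v))) (A w) ->
  Forall (fun u => A w u /\ down1 le v u) rest ->
  subset (maxs le (inter (fold_left (fun acc u => join le acc (down1 le u)) rest acc)
                         (down1 le v))) (A w).
Proof.
  intros Hjoin Hv. revert acc.
  induction rest as [| u rest IH]; intros acc Hacc Hmax Hrest; simpl; auto.
  apply Forall_cons_iff in Hrest as [[Hu Huv] Hrest].
  apply (down1E le le_poset) in Huv.
  assert (Hdu : Ecal (down1 le u)) by exact (aware_expr w u Hu).
  apply IH; auto using frame_join.
  apply Hjoin; auto.
  intros x [Hx | Hx]; auto.
  rewrite (maxs_inter_down1 le le_poset u v Huv x Hx). exact Hu.
Qed.

Lemma joinability_condition_ii :
  awareness_joinability le Ecal A -> condition_ii le A.
Proof.
  intros Hjoin w v Hv v1 rest Hall.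
  apply Forall_cons_iff in Hall as [[Hv1 Hv1v] Hrest].
  apply (down1E le le_poset) in Hv1v.
  apply fold_join_down1_aware; auto.
  - exact (aware_expr w v1 Hv1).
  - intros x Hx. rewrite (maxs_inter_down1 le le_poset v1 v Hv1v x Hx). exact Hv1.
Qed.

Lemma condition_ii_joinability :
  quasi_principal le Ecal ->
  (forall E, Ecal E -> finite_set (maxs le E)) ->
  condition_ii le A -> awareness_joinability le Ecal A.
Proof.
  intros Hqp Hfin Hii w v E E' HE HE' Hv Hsub.
  assert (Hdv : Ecal (down1 le v)) by exact (aware_expr w v Hv).
  destruct (finite_set_union _ _ (Hfin _ (frame_inter _ _ HE Hdv))
                                 (Hfin _ (frame_inter _ _ HE' Hdv))) as [M HM].
  assert (HMmax : forall m, In m M -> (E m \/ E' m) /\ le m v /\ A w m).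
  { intros m Hm. pose proof (Hsub m (proj2 (HM m) Hm)) as Hwm.
    apply HM in Hm as [[[Hm Hmv] _] | [[Hm Hmv] _]];
      apply (down1E le le_poset) in Hmv; auto. }
  assert (Hcut : inter (join le E E') (down1 le v) =
                 inter (rho le (fun m => In m M)) (down1 le v)).
  { apply rho_inter_down1_cofinal; auto.
    - intros x x' [Hx | Hx] Hx'x; [left | right];
        eapply regular_open_down_closed; eauto.
    - intros m Hm. apply HMmax, Hm.
    - intros x Hx Hxv.
      assert (Hxv' : down1 le v x) by (apply (down1E le le_poset); exact Hxv).
      destruct Hx as [Hx | Hx];
        [ destruct (Hqp _ x (frame_inter _ _ HE Hdv) (conj Hx Hxv')) as [m [Hm Hxm]]
        | destruct (Hqp _ x (frame_inter _ _ HE' Hdv) (conj Hx Hxv')) as [m [Hm Hxm]] ];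
        exists m; split; auto; apply HM; [left | right]; exact Hm. }
  intros x Hx. rewrite Hcut in Hx.
  destruct M as [| m1 rest].
  - destruct Hx as [[Hx _] _]. destruct (rho_empty le le_poset x Hx).
  - destruct (HMmax m1 (or_introl eq_refl)) as [_ [_ Hm1]].
    rewrite <- (join_downs_eq le le_poset) in Hx
      by exact (frame_regular_open _ (aware_expr w m1 Hm1)).
    apply (Hii w v Hv m1 rest); auto.
    apply Forall_forall. intros m Hm. destruct (HMmax m Hm) as [_ [Hmv Hwm]].
    split; auto. apply (down1E le le_poset). exact Hmv.
Qed.

End Frame.

Theorem lemma3p2 (Omega : Type) (le : Omega -> Omega -> Prop)
  (Ecal : (Omega -> Prop) -> Prop) (A : Omega -> Omega -> Prop) :
  possibility_frame le Ecal ->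
  quasi_principal le Ecal ->
  has_maximum le ->
  awareness_expressible le Ecal A ->
  (awareness_joinability le Ecal A -> condition_ii le A) /\
  ((forall E, Ecal E -> finite_set (maxs le E)) ->
     condition_ii le A -> awareness_joinability le Ecal A).
Proof.
  intros Hframe Hqp _ Hae. split.
  - apply joinability_condition_ii; assumption.
  - apply condition_ii_joinability; assumption.
Qed.
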